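(* Let $n\ge 3$ be an integer and let $c>0$ be a real constant satisfying \[ 2c + \frac{2}{3}c^2 - \frac{2c}{3(n-2)} > 1 . \] Put $d = \lceil \sqrt{c(n-2)}\,\rceil$. Then there exists a real polynomial on $\mathbb{R}^n$ of degree $d$ if $d$ is even, and of degree $d+1$ if $d$ is odd, which is a $\tfrac13$-approximation of $NAE_n$.
   Context: $NAE_n:\{0,1\}^n\to\{0,1\}$ is the function that equals $1$ iff $x\in\{0^n,1^n\}$, i.e. all bits of the input are the same. A real polynomial $q$ on $\mathbb{R}^n$ is a $\tfrac13$-approximation of $g:\{0,1\}^n\to\{0,1\}$ if $|g(x)-q(x)|\le \tfrac13$ for every $x\in\{0,1\}^n$. *)

From HB Require Import structures.
From mathcomp Require Import all_boot all_order all_algebra.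
From mathcomp Require Import reals.
From mathcomp Require Import mpoly.
Set Implicit Arguments. Unset Strict Implicit. Unset Printing Implicit Defensive.
Import Order.TTheory GRing.Theory Num.Theory.
Local Open Scope ring_scope.

Definition NAE (n : nat) (x : 'I_n -> bool) : nat :=
  if [forall i, forall j, x i == x j] then 1%N else 0%N.

Definition bitpt (R : nzRingType) (n : nat) (x : 'I_n -> bool) : 'I_n -> R :=
  fun i => (x i)%:R.

Definition approx13 (R : realType) (n : nat) (g : ('I_n -> bool) -> nat)
  (q : {mpoly R[n]}) : Prop :=
  forall x : 'I_n -> bool, `|(g x)%:R - q.@[bitpt R x]| <= 3^-1.

(* total degree of a nonzero multivariate polynomial is (msize q).-1 *)
Definition mdegree (R : realType) (n : nat) (q : {mpoly R[n]}) : nat :=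
  (msize q).-1.

From HB Require Import structures.
From mathcomp Require Import all_boot all_order all_algebra.
From mathcomp Require Import reals.
From mathcomp Require Import mpoly.
From mathcomp Require Import ring lra.
Import Order.TTheory GRing.Theory Num.Theory.
Set Implicit Arguments. Unset Strict Implicit. Unset Printing Implicit Defensive.
Local Open Scope ring_scope.

(* The approximant is a rescaled Chebyshev polynomial T_D, with D even, composed
   with the affine form L(x) = (2|x| - n)/(n - 2) of the Hamming weight |x|.
   On a non-constant input 1 <= |x| <= n - 1, so |L(x)| <= 1 and |T_D(L(x))| <= 1;
   on the two constant inputs L(x) = +-(1 + 2/(n - 2)), and since D is even
   T_D(L(x)) = T_D(1 + 2/(n - 2)) =: A.  The Taylor-type lower bound
   T_D(1 + e) >= 1 + D^2 e + D^2 (D^2 - 1) e^2 / 6, together with D^2 >= c (n - 2)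
   and the hypothesis on c, gives A >= 2.  Hence 2/(3A) T_D(L(x)) equals 2/3 on
   constant inputs and has modulus at most 1/3 elsewhere. *)

Fixpoint cheb_pair (A : pzRingType) (y : A) (k : nat) : A * A :=
  if k is k'.+1 then let p := cheb_pair y k' in (p.2, (y * p.2) *+ 2 - p.1)
  else (1, y).

Definition cheb (A : pzRingType) (y : A) (k : nat) : A := (cheb_pair y k).1.

Section ChebyshevRing.
Variable A : pzRingType.
Implicit Types (y : A) (k : nat).

Lemma cheb0 y : cheb y 0 = 1. Proof. by []. Qed.
Lemma cheb1 y : cheb y 1 = y. Proof. by []. Qed.
Lemma chebSS y k : cheb y k.+2 = (y * cheb y k.+1) *+ 2 - cheb y k.
Proof. by []. Qed.

Lemma cheb_opp y k : cheb (- y) k = (-1) ^+ k * cheb y k.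
Proof.
suff: cheb (- y) k = (-1) ^+ k * cheb y k /\
      cheb (- y) k.+1 = (-1) ^+ k.+1 * cheb y k.+1 by case.
elim: k => [|k [IH1 IH2]]; first by rewrite !cheb0 !cheb1 expr0 mul1r expr1 mulN1r.
split=> //; rewrite !chebSS IH1 IH2 !exprS.
by rewrite !mulN1r opprK mulNr mulrN mulNr opprK mulrA (commr_sign y k) -mulrA mulrBr mulrnAr.
Qed.

Lemma rmorph_cheb (B : pzRingType) (f : {rmorphism A -> B}) y k :
  f (cheb y k) = cheb (f y) k.
Proof.
suff: f (cheb y k) = cheb (f y) k /\ f (cheb y k.+1) = cheb (f y) k.+1 by case.
elim: k => [|k [IH1 IH2]]; first by rewrite rmorph1.
by split=> //; rewrite !chebSS rmorphB rmorphMn rmorphM IH1 IH2.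
Qed.

End ChebyshevRing.

Lemma cheb_invariant (A : comPzRingType) (y : A) k :
  cheb y k ^+ 2 + cheb y k.+1 ^+ 2 - 2 * y * cheb y k * cheb y k.+1 = 1 - y ^+ 2.
Proof.
elim: k => [|k IH]; first by rewrite cheb0 cheb1; ring.
by rewrite chebSS -IH mulr2n; ring.
Qed.

Section ChebyshevReal.
Variable R : realFieldType.
Implicit Types (y dl x : R) (k : nat).

Lemma cheb_norm_even y k : ~~ odd k -> cheb `|y| k = cheb y k.
Proof.
move=> k_even; have [//|y_lt0] := ger0P y.
by rewrite cheb_opp -signr_odd (negbTE k_even) mul1r.
Qed.

Lemma cheb_norm_le1 y k : `|y| <= 1 -> `|cheb y k| <= 1.
Proof.
rewrite !ler_norml => /andP[y_ge y_le].
suff: cheb y k ^+ 2 <= 1 by move=> ?; apply/andP; split; nra.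
elim: k => [|k IH]; first by rewrite cheb0 expr1n.
have := cheb_invariant y k; set a := cheb y k; set b := cheb y k.+1 => E.
have y2 : y ^+ 2 <= 1 by nra.
have [y2_lt|y2_eq] := ltP (y ^+ 2) 1.
  (* by [E], (a - y b)^2 = (1 - y^2)(1 - b^2) *)
  have := sqr_ge0 (a - y * b); nra.
have {y2_eq} y2_eq : y ^+ 2 = 1 by apply/le_anti; rewrite y2 y2_eq.
have -> : b = y * a.
  apply/eqP; rewrite -subr_eq0 -sqrf_eq0; apply/eqP.
  have -> : (b - y * a) ^+ 2 = a ^+ 2 + b ^+ 2 - 2 * y * a * b - a ^+ 2 * (1 - y ^+ 2).
    by ring.
  by rewrite E y2_eq subrr mulr0 subrr.
by rewrite exprMn y2_eq mul1r.
Qed.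

Definition cheb_minorant dl x := 1 + x ^+ 2 * dl + x ^+ 2 * (x ^+ 2 - 1) * dl ^+ 2 / 6.

Lemma cheb_minorantSS dl k :
  cheb_minorant dl k.+2%:R = ((1 + dl) * cheb_minorant dl k.+1%:R) *+ 2
    - cheb_minorant dl k%:R - dl ^+ 3 * k.+1%:R ^+ 2 * (k.+1%:R ^+ 2 - 1) / 3.
Proof. by rewrite /cheb_minorant !mulr2n -[k.+2]addn2 -[k.+1]addn1 !natrD; field. Qed.

Lemma cheb_minorant_gap dl k : 0 <= dl ->
  0 <= cheb (1 + dl) k - cheb_minorant dl k%:R
    <= cheb (1 + dl) k.+1 - cheb_minorant dl k.+1%:R.
Proof.
(* The gap e_k satisfies e_(k+2) = 2 (1 + dl) e_(k+1) - e_k + defect, defect >= 0. *)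
move=> dl_ge0; elim: k => [|k /andP[gap_ge0 gap_le]].
  by rewrite cheb0 cheb1 /cheb_minorant; apply/andP; split; lra.
apply/andP; split; first exact: le_trans gap_le.
have defect_ge0 : 0 <= dl ^+ 3 * k.+1%:R ^+ 2 * (k.+1%:R ^+ 2 - 1) / 3.
  have k1_ge1 : 1 <= k.+1%:R :> R by rewrite ler1n.
  apply: divr_ge0; last by lra.
  apply: mulr_ge0; first by apply: mulr_ge0; apply: exprn_ge0 => //; lra.
  rewrite subr_ge0 expr2; nra.
rewrite chebSS cheb_minorantSS !mulr2n; nra.
Qed.

Lemma cheb_ge_minorant dl k : 0 <= dl -> cheb_minorant dl k%:R <= cheb (1 + dl) k.
Proof. by move=> /(cheb_minorant_gap k) /andP[+ _]; rewrite subr_ge0. Qed.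

Lemma cheb_ge2 (c m : R) k : 0 < c -> 1 <= m ->
  1 < 2 * c + 2 / 3 * c ^+ 2 - 2 * c / (3 * m) -> c * m <= k%:R ^+ 2 ->
  2 <= cheb (1 + 2 / m) k.
Proof.
move=> c_gt0 m_ge1 hc ck.
apply: le_trans (cheb_ge_minorant _ _); last by apply: divr_ge0; lra.
set w := k%:R ^+ 2 / m; set im := m^-1.
have im_bd : 0 < im <= 1 by rewrite invr_gt0 invf_le1; lra.
have w_ge : c <= w by rewrite /w ler_pdivlMr //; lra.
have -> : cheb_minorant (2 / m) k%:R = 1 + 2 * w + 2 / 3 * (w ^+ 2 - w * im).
  by rewrite /cheb_minorant /w /im; field; lra.
have hc_im : 1 < 2 * c + 2 / 3 * c ^+ 2 - 2 * c / 3 * im.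
  by move: hc; rewrite invfM !mulrA.
nra.
Qed.

End ChebyshevReal.

Section MultivariateDegree.
Variable n : nat.

Lemma msizeDl (R : nzRingType) (p q : {mpoly R[n]}) :
  (msize q < msize p)%N -> msize (p + q) = msize p.
Proof.
move=> q_lt; apply/anti_leq/andP; split.
  by apply: leq_trans (msizeD_le _ _) _; rewrite geq_max leqnn ltnW.
have := msizeD_le (p + q) (- q); rewrite addrK msizeN leq_max => /orP[] // p_le.
by move: (leq_ltn_trans p_le q_lt); rewrite ltnn.
Qed.

Lemma msize_cheb (R : numDomainType) (L : {mpoly R[n]}) k :
  msize L = 2%N -> msize (cheb L k) = k.+1.
Proof.
move=> L_size; have L_neq0 : L != 0 by rewrite -msize_poly_eq0 L_size.
suff: msize (cheb L k) = k.+1 /\ msize (cheb L k.+1) = k.+2 by case.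
elim: k => [|k [IH1 IH2]]; first by rewrite cheb0 cheb1 msize1.
have lead_size : msize ((L * cheb L k.+1) *+ 2) = k.+3.
  by rewrite -scaler_nat msizeZ ?pnatr_eq0 // msizeM -?msize_poly_eq0 ?L_size ?IH2.
by split=> //; rewrite chebSS msizeDl lead_size // msizeN IH1.
Qed.

Lemma msize_sumX (R : nzRingType) : (0 < n)%N ->
  msize (\sum_(i < n) 'X_i : {mpoly R[n]}) = 2%N.
Proof.
move=> n_gt0; pose i0 := Ordinal n_gt0.
apply/anti_leq/andP; split.
  apply: leq_trans (msize_sum _ _ _) _.
  by apply/bigmax_leqP => i _; rewrite msizeX mdeg1.
have : U_(i0)%MM \in msupp (\sum_(i < n) 'X_i : {mpoly R[n]}).
  rewrite mcoeff_msupp raddf_sum /= (bigD1 i0) //= mcoeffXU eqxx.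
  by rewrite big1 ?addr0 ?oner_eq0 // => i /negbTE; rewrite mcoeffXU => ->.
by move/msize_mdeg_lt; rewrite mdeg1.
Qed.

End MultivariateDegree.

Section BitVectors.
Variables (R : realFieldType) (n : nat).
Implicit Types x : 'I_n -> bool.

Lemma sum_bits_ge1 x i : x i -> 1 <= \sum_j (x j)%:R :> R.
Proof.
by move=> xi; rewrite (bigD1 i) //= xi lerDl sumr_ge0 // => j _; apply: ler0n.
Qed.

Lemma sum_bits_bounds x i j : x i -> ~~ x j ->
  1 <= (\sum_k (x k)%:R : R) <= n%:R - 1.
Proof.
move=> xi xj; have ones_ge1 := sum_bits_ge1 xi.
have zeros_ge1 := @sum_bits_ge1 (fun k => ~~ x k) j xj.
have count_compl : \sum_k (x k)%:R + \sum_k (~~ x k)%:R = n%:R :> R.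
  rewrite -big_split /= (eq_bigr (fun _ => 1)) ?sumr_const ?card_ord //.
  by move=> k _; case: (x k); rewrite ?addr0 ?add0r.
by apply/andP; split; lra.
Qed.

Definition nae_affine : {mpoly R[n]} :=
  (n - 2)%:R^-1 *: (2 *: \sum_(i < n) 'X_i - n%:R%:MP).

Lemma meval_nae_affine x :
  nae_affine.@[bitpt R x] = (2 * \sum_i (x i)%:R - n%:R) / (n - 2)%:R.
Proof.
rewrite mevalZ mevalB mevalZ mevalC raddf_sum mulrC /=.
by congr ((2 * _ - _) / _); apply: eq_bigr => i _; rewrite mevalXU.
Qed.

Hypothesis n_gt2 : (2 < n)%N.

Let m_gt0 : 0 < (n - 2)%:R :> R. Proof. by rewrite ltr0n subn_gt0. Qed.

Lemma msize_nae_affine : msize nae_affine = 2%N.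
Proof.
have n_gt0 : (0 < n)%N by apply: ltn_trans n_gt2.
rewrite msizeZ ?invr_eq0 ?gt_eqF // msizeDl msizeZ ?pnatr_eq0 ?msize_sumX //.
by rewrite msizeN msizeC; case: (_ != 0).
Qed.

Lemma nae_affine_const x : [forall i, forall j, x i == x j] ->
  `|nae_affine.@[bitpt R x]| = 1 + 2 / (n - 2)%:R.
Proof.
move=> x_const; pose i0 := Ordinal (ltn_trans (isT : (0 < 2)%N) n_gt2).
have x_eq i : x i = x i0 by move/forallP: x_const => /(_ i) /forallP /(_ i0) /eqP.
have sum_eq : \sum_i (x i)%:R = (x i0)%:R * n%:R :> R.
  rewrite (eq_bigr (fun=> (x i0)%:R)) => [|i _]; last by rewrite x_eq.
  by rewrite sumr_const card_ord mulr_natr.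
have num_norm : `|2 * ((x i0)%:R * n%:R) - n%:R| = n%:R :> R.
  by case: (x i0); rewrite ?mul1r ?mul0r ?mulr0 ?sub0r ?normrN ?mulr_natl ?mulr2n ?addrK normr_nat.
rewrite meval_nae_affine sum_eq normrM num_norm normfV (gtr0_norm m_gt0).
by rewrite -{1}(subnK (ltnW n_gt2)) natrD mulrDl divff ?gt_eqF.
Qed.

Lemma nae_affine_nonconst x : ~~ [forall i, forall j, x i == x j] ->
  `|nae_affine.@[bitpt R x]| <= 1.
Proof.
rewrite negb_forall => /existsP[i]; rewrite negb_forall => /existsP[j] xij.
have n_eq : n%:R = (n - 2)%:R + 2 :> R by rewrite natrB ?subrK // ltnW.
have /andP[sum_ge sum_le] : 1 <= (\sum_k (x k)%:R : R) <= n%:R - 1.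
  case xi: (x i); case xj: (x j); rewrite ?xi ?xj // in xij.
    by apply: (@sum_bits_bounds _ i j); rewrite ?xi ?xj.
  by apply: (@sum_bits_bounds _ j i); rewrite ?xi ?xj.
rewrite meval_nae_affine normrM normfV (gtr0_norm m_gt0) ler_pdivrMr // mul1r ler_norml.
by apply/andP; split; lra.
Qed.

End BitVectors.

Lemma approx13_NAE (R : realType) n (p : {mpoly R[n]}) (a : R) : 2 <= a ->
  (forall x, [forall i, forall j, x i == x j] -> p.@[bitpt R x] = a) ->
  (forall x, ~~ [forall i, forall j, x i == x j] -> `|p.@[bitpt R x]| <= 1) ->
  approx13 (@NAE n) ((2 / (3 * a)) *: p).
Proof.
move=> a_ge2 p_const p_nonconst x; rewrite /NAE mevalZ.
set k := 2 / (3 * a).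
have k_gt0 : 0 < k by rewrite divr_gt0 //; lra.
have ka : k * a = 2 / 3 by rewrite /k; field; rewrite gt_eqF //; lra.
case: ifP => [x_const | /negbT x_nonconst].
  rewrite p_const // ka (_ : 1%:R - 2 / 3 = 3^-1) ?ger0_norm ?invr_ge0 //.
  by field.
rewrite sub0r normrN normrM (gtr0_norm k_gt0).
have := p_nonconst x x_nonconst; have := normr_ge0 (p.@[bitpt R x]); nra.
Qed.

Lemma sqr_ceil_sqrt_ge (R : realType) (a : R) : 0 <= a ->
  a <= (Num.ceil (Num.sqrt a))%:~R ^+ 2.
Proof.
move=> a_ge0; have sqrt_le := ceil_ge (Num.sqrt a).
have ceil_ge0 := le_trans (sqrtr_ge0 a) sqrt_le.
by rewrite -{1}(sqr_sqrtr a_ge0) ler_sqr ?nnegrE ?sqrtr_ge0.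
Qed.

Theorem theorem9 (R : realType) (n : nat) (c : R) (d : nat) :
  (3 <= n)%N -> 0 < c ->
  1 < 2 * c + 2 / 3 * c ^+ 2 - 2 * c / (3 * (n - 2)%:R) ->
  d%:Z = Num.ceil (Num.sqrt (c * (n - 2)%:R)) ->
  exists q : {mpoly R[n]},
    q != 0 /\ mdegree q = (if odd d then d.+1 else d) /\ approx13 (@NAE n) q.
Proof.
move=> n_ge3 c_gt0 hc hd; set m : R := (n - 2)%:R.
have m_ge1 : 1 <= m by rewrite ler1n subn_gt0.
set D := if odd d then d.+1 else d.
have D_even : ~~ odd D by rewrite /D; case: ifP => //= ->.
have cm_le : c * m <= D%:R ^+ 2.
  apply: le_trans (sqr_ceil_sqrt_ge _) _; first by apply: mulr_ge0; lra.
  rewrite -hd ler_sqr ?nnegrE ?ler0n // ler_nat /D.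
  by case: ifP.
have A_ge2 := cheb_ge2 c_gt0 m_ge1 hc cm_le.
set q := (2 / (3 * cheb (1 + 2 / m) D)) *: cheb (nae_affine R n) D.
have q_size : msize q = D.+1.
  rewrite msizeZ ?msize_cheb ?msize_nae_affine //.
  by rewrite mulf_neq0 ?invr_eq0 ?mulf_neq0 ?pnatr_eq0 ?gt_eqF //; lra.
exists q; split; first by rewrite -msize_poly_eq0 q_size.
split; first by rewrite /mdegree q_size.
apply: approx13_NAE => // x x_const; rewrite rmorph_cheb.
  by rewrite -cheb_norm_even // nae_affine_const.
by apply: cheb_norm_le1; apply: nae_affine_nonconst.
Qed.
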